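(* In the setting of error-feedback sparsification below, with $O_k\in(0,1)$, define $m_k^{t+1}=m_{B,k}^{t+1}m_{A,k}^{t+1}\in\mathbb{R}^{d\times\ell}$. Then for every $t\ge0$, $$\mathbb{E}\left[\left\|m_k^{t+1}\right\|_F\right] \leq \frac{2(1-O_k)}{O_k^2}\max_{0\leq i \leq t}\|\Delta\tilde{\theta}_k^i\|_F^2.$$
   Context: Setting: LoRA factors $\theta_B\in\mathbb{R}^{d\times r}$, $\theta_A\in\mathbb{R}^{r\times\ell}$. Let $q=r(d+\ell)$ and let $\mathcal{S}:\mathbb{R}^{q}\to\mathbb{R}^{q}$ be a (possibly random) sparsification operator keeping $u=O_kq$ nonzero entries ($0<u<q$) with $\mathbb{E}\|\mathcal{S}(x)-x\|_2^2\le(1-u/q)\|x\|_2^2$ for all $x$. Client $k$ has memories $m_{B,k}^t\in\mathbb{R}^{d\times r}$, $m_{A,k}^t\in\mathbb{R}^{r\times\ell}$ and concatenations $\tilde m_k^t=[m_{B,k}^{t\mathsf T}\ m_{A,k}^t]$, $\Delta\tilde\theta_k^t=[\Delta\theta_{B,k}^{t\mathsf T}\ \Delta\theta_{A,k}^t]$, $\tilde\theta_k^t=[\theta_{B,k}^{t\mathsf T}\ \theta_{A,k}^t]$ (identified with vectors in $\mathbb{R}^q$), where $\Delta\theta_{B,k}^t,\Delta\theta_{A,k}^t$ are the locally trained factors (trained with a near-orthogonality regularized loss), $\tilde\theta_k^t=\mathcal{S}(\tilde m_k^t+\Delta\tilde\theta_k^t)$, $\tilde m_k^{t+1}=\tilde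 m_k^t+\Delta\tilde\theta_k^t-\tilde\theta_k^t$, and $\tilde m_k^0=0$. Expectation is over the randomness of $\mathcal{S}$. *)

From HB Require Import structures.
From mathcomp Require Import all_boot all_order all_algebra.
Set Implicit Arguments. Unset Strict Implicit. Unset Printing Implicit Defensive.
Import Order.TTheory GRing.Theory Num.Theory.
Local Open Scope ring_scope.

Definition frob (R : rcfType) (m n : nat) (M : 'M[R]_(m, n)) : R :=
  Num.sqrt (\sum_(i < m) \sum_(j < n) M i j ^+ 2).

Definition keep_mask (R : rcfType) (m n : nat) (I : {set 'I_m * 'I_n})
    (M : 'M[R]_(m, n)) : 'M[R]_(m, n) :=
  \matrix_(i, j) (if (i, j) \in I then M i j else 0).

Definition concat (R : rcfType) (d r l : nat) (B : 'M[R]_(d, r)) (A : 'M[R]_(r, l))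
  : 'M[R]_(r, d + l) := row_mx B^T A.

Definition factB (R : rcfType) (d r l : nat) (M : 'M[R]_(r, d + l)) : 'M[R]_(d, r) :=
  (lsubmx M)^T.
Definition factA (R : rcfType) (d r l : nat) (M : 'M[R]_(r, d + l)) : 'M[R]_(r, l) :=
  rsubmx M.

(* The random sparsifier S is described by its law: given the input x, the set
   of kept coordinates I is drawn with probability K x I (fresh, independent
   randomness at each round).  Error-feedback process:
     x_t = m_t + Delta_t,  theta_t = S(x_t) = mask I_t x_t,
     m_{t+1} = x_t - theta_t.
   [EF_expect K Delta n t0 M f] is the expectation of f(m_{t0+n}) given m_{t0} = M. *)
Fixpoint EF_expect (R : rcfType) (r n : nat)
    (K : 'M[R]_(r, n) -> {set 'I_r * 'I_n} -> R)
    (Delta : nat -> 'M[R]_(r, n)) (steps t0 : nat) (M : 'M[R]_(r, n))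
    (f : 'M[R]_(r, n) -> R) : R :=
  match steps with
  | 0 => f M
  | s.+1 =>
      \sum_(I : {set 'I_r * 'I_n})
        K (M + Delta t0) I *
        EF_expect K Delta s t0.+1 ((M + Delta t0) - keep_mask I (M + Delta t0)) f
  end.

(* The error-feedback memory obeys a contractive recursion in mean square:
   Young's inequality with weight O/2 gives
   E|m_(t+1)|^2 <= (1-O)(1+O/2) |m_t|^2 + (1-O)(1+2/O) |Delta_t|^2,
   so E|m_t|^2 stays below 4(1-O)/O^2 max_i |Delta_i|^2, which dominates the
   fixed point of this recursion.  Finally
   |m_B m_A|_F <= |m_B|_F |m_A|_F <= (|m_B|^2 + |m_A|^2)/2, and
   |m_B|^2 + |m_A|^2 is the squared norm of the concatenation. *)
From HB Require Import structures.
From mathcomp Require Import all_boot all_order all_algebra.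
From mathcomp Require Import ring lra.
Import Order.TTheory GRing.Theory Num.Theory.
Local Open Scope ring_scope.

Set Implicit Arguments.
Unset Strict Implicit.

Section FrobeniusNorm.
Variable R : rcfType.

Definition sqfrob (m n : nat) (M : 'M[R]_(m, n)) : R := \sum_i \sum_j M i j ^+ 2.

Lemma sqfrob_ge0 m n (M : 'M[R]_(m, n)) : 0 <= sqfrob M.
Proof. by apply: sumr_ge0 => i _; apply: sumr_ge0 => j _; apply: sqr_ge0. Qed.

Lemma sqr_frob m n (M : 'M[R]_(m, n)) : frob M ^+ 2 = sqfrob M.
Proof. by rewrite sqr_sqrtr // sqfrob_ge0. Qed.

Lemma sqfrob0 m n : sqfrob (0 : 'M[R]_(m, n)) = 0.
Proof. by rewrite /sqfrob big1 // => i _; rewrite big1 // => j _; rewrite mxE expr0n. Qed.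

Lemma sqfrob_tr m n (M : 'M[R]_(m, n)) : sqfrob M^T = sqfrob M.
Proof.
by rewrite /sqfrob exchange_big; apply: eq_bigr => i _; apply: eq_bigr => j _; rewrite mxE.
Qed.

Lemma sqfrob_hsubmx m n1 n2 (M : 'M[R]_(m, n1 + n2)) :
  sqfrob (lsubmx M) + sqfrob (rsubmx M) = sqfrob M.
Proof.
rewrite /sqfrob -big_split; apply: eq_bigr => i _ /=.
by rewrite big_split_ord; congr (_ + _); apply: eq_bigr => j _; rewrite mxE.
Qed.

Lemma sqfrob_factBA d r l (M : 'M[R]_(r, d + l)) :
  sqfrob (factB M) + sqfrob (factA M) = sqfrob M.
Proof. by rewrite /factB sqfrob_tr sqfrob_hsubmx. Qed.

Lemma cauchy_schwarz_sum n (x y : 'I_n -> R) :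
  (\sum_k x k * y k) ^+ 2 <= (\sum_k x k ^+ 2) * (\sum_k y k ^+ 2).
Proof.
have lagrange : \sum_i \sum_j (x i * y j - x j * y i) ^+ 2 =
    \sum_i \sum_j x i ^+ 2 * y j ^+ 2 + \sum_i \sum_j x j ^+ 2 * y i ^+ 2
    - 2 * \sum_i \sum_j (x i * y i) * (x j * y j).
  rewrite mulr_sumr -big_split -sumrB; apply: eq_bigr => i _ /=.
  by rewrite mulr_sumr -big_split -sumrB; apply: eq_bigr => j _ /=; ring.
rewrite [X in _ + X - _]exchange_big /= -big_distrlr -big_distrlr /= in lagrange.
have : 0 <= \sum_i \sum_j (x i * y j - x j * y i) ^+ 2.
  by apply: sumr_ge0 => i _; apply: sumr_ge0 => j _; apply: sqr_ge0.
rewrite lagrange expr2; lra.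
Qed.

Lemma sqfrob_mulmx_le m n p (A : 'M[R]_(m, n)) (B : 'M[R]_(n, p)) :
  sqfrob (A *m B) <= sqfrob A * sqfrob B.
Proof.
rewrite [sqfrob B]/sqfrob exchange_big mulr_suml; apply: ler_sum => i _.
rewrite mulr_sumr; apply: ler_sum => j _.
by rewrite mxE; apply: (cauchy_schwarz_sum (A i) (B^~ j)).
Qed.

Lemma frob_mulmx_le m n p (A : 'M[R]_(m, n)) (B : 'M[R]_(n, p)) :
  frob (A *m B) <= (sqfrob A + sqfrob B) / 2.
Proof.
have [a_ge0 b_ge0] := (sqfrob_ge0 A, sqfrob_ge0 B).
have mean_ge0 : 0 <= (sqfrob A + sqfrob B) / 2 by lra.
rewrite -(ger0_norm mean_ge0) -sqrtr_sqr ler_sqrt ?sqr_ge0 //.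
apply: le_trans (sqfrob_mulmx_le A B) _.
by have := sqr_ge0 (sqfrob A - sqfrob B); nra.
Qed.

Lemma frob_factBA_le d r l (M : 'M[R]_(r, d + l)) :
  frob (factB M *m factA M) <= sqfrob M / 2.
Proof. by rewrite -sqfrob_factBA; apply: frob_mulmx_le. Qed.

Lemma sqfrobD_le m n (A B : 'M[R]_(m, n)) e : 0 < e ->
  sqfrob (A + B) <= (1 + e) * sqfrob A + (1 + e^-1) * sqfrob B.
Proof.
move=> e_gt0; rewrite /sqfrob !mulr_sumr -big_split; apply: ler_sum => i _.
rewrite !mulr_sumr -big_split; apply: ler_sum => j _ /=.
rewrite mxE -subr_ge0.
have -> : (1 + e) * A i j ^+ 2 + (1 + e^-1) * B i j ^+ 2 - (A i j + B i j) ^+ 2 =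
    (e * A i j - B i j) ^+ 2 / e by field; rewrite gt_eqF.
by rewrite divr_ge0 ?sqr_ge0 ?ltW.
Qed.

End FrobeniusNorm.

Section ErrorFeedback.
Variables (R : rcfType) (r n : nat).
Variables (K : 'M[R]_(r, n) -> {set 'I_r * 'I_n} -> R) (Delta : nat -> 'M[R]_(r, n)).
Hypothesis K_ge0 : forall x I, 0 <= K x I.
Hypothesis K_sum1 : forall x, \sum_I K x I = 1.

Local Notation EF := (EF_expect K Delta).

Definition sparsify_sqerr (x : 'M[R]_(r, n)) : R :=
  \sum_I K x I * sqfrob (x - keep_mask I x).

Lemma EF_expect_le s t0 M (f g : 'M[R]_(r, n) -> R) :
  (forall X, f X <= g X) -> EF s t0 M f <= EF s t0 M g.
Proof.
move=> le_fg; elim: s t0 M => [|s IHs] t0 M /=; first exact: le_fg.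
by apply: ler_sum => I _; apply: ler_wpM2l.
Qed.

Lemma EF_expectZ s t0 M (f : 'M[R]_(r, n) -> R) c :
  EF s t0 M (fun X => c * f X) = c * EF s t0 M f.
Proof.
elim: s t0 M => [|s IHs] t0 M //=.
by rewrite mulr_sumr; apply: eq_bigr => I _; rewrite IHs mulrCA.
Qed.

Section AffineContraction.
Variables (T : nat) (rho B : R).
Hypothesis rho_ge0 : 0 <= rho.
Hypothesis step_le : forall t0 M, (t0 < T)%N ->
  sparsify_sqerr (M + Delta t0) <= rho * sqfrob M + (1 - rho) * B.

Lemma EF_expect_sqfrob_affine s t0 M : (t0 + s <= T)%N ->
  EF s t0 M (@sqfrob R r n) <= rho ^+ s * sqfrob M + (1 - rho ^+ s) * B.
Proof.
elim: s t0 M => [|s IHs] t0 M /= le_T; first by rewrite expr0 mul1r subrr mul0r addr0.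
set x := M + Delta t0.
have t0_lt_T : (t0 < T)%N by apply: leq_trans le_T; rewrite addnS ltnS leq_addr.
have le_T' : (t0.+1 + s <= T)%N by rewrite addSnnS.
apply: le_trans (ler_sum _ (fun J _ =>
  ler_wpM2l (K_ge0 x J) (IHs _ (x - keep_mask J x) le_T'))) _.
under eq_bigr => J _ do rewrite mulrDr mulrCA [K x J * (_ * B)]mulrCA.
rewrite big_split -!mulr_sumr -mulr_suml K_sum1 mul1r /=.
apply: le_trans (lerD (ler_wpM2l (exprn_ge0 s rho_ge0) (step_le M t0_lt_T)) (lexx _)) _.
by rewrite exprS; nra.
Qed.

End AffineContraction.

Section FixedPoint.
Variables (O D : R) (T : nat).
Hypotheses (O_gt0 : 0 < O) (O_le1 : O <= 1).
Hypothesis sparsify_contract : forall x, sparsify_sqerr x <= (1 - O) * sqfrob x.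
Hypothesis Delta_le : forall i, (i < T)%N -> sqfrob (Delta i) <= D.

Let rho := (1 - O) * (1 + O / 2).

Lemma EF_step_le t0 M : (t0 < T)%N ->
  sparsify_sqerr (M + Delta t0)
    <= rho * sqfrob M + (1 - rho) * (4 * (1 - O) / O ^+ 2 * D).
Proof.
move=> t0_lt_T; apply: le_trans (sparsify_contract _) _.
have young := sqfrobD_le M (Delta t0) (divr_gt0 O_gt0 (ltr0Sn R 1)).
set c := 1 + (O / 2)^-1 in young.
have c_ge0 : 0 <= c by rewrite addr_ge0 ?invr_ge0 ?divr_ge0 // ltW.
have a_ge0 : 0 <= 1 - O by rewrite subr_ge0.
have le_D := Delta_le t0_lt_T.
have D_ge0 : 0 <= D := le_trans (sqfrob_ge0 _) le_D.
have -> : (1 - rho) * (4 * (1 - O) / O ^+ 2 * D) = (1 - O) * c * D + (1 - O) * D.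
  by rewrite /rho /c; field; rewrite gt_eqF.
have := ler_wpM2l (mulr_ge0 a_ge0 c_ge0) le_D.
have := ler_wpM2l a_ge0 young.
have := mulr_ge0 a_ge0 D_ge0.
rewrite /rho; lra.
Qed.

Lemma EF_expect_sqfrob_le s t0 M : (t0 + s <= T)%N ->
  sqfrob M <= 4 * (1 - O) / O ^+ 2 * D ->
  EF s t0 M (@sqfrob R r n) <= 4 * (1 - O) / O ^+ 2 * D.
Proof.
move=> le_T le_M.
have rho_ge0 : 0 <= rho by rewrite mulr_ge0 ?subr_ge0 // addr_ge0 ?divr_ge0 // ltW.
apply: le_trans (EF_expect_sqfrob_affine rho_ge0 EF_step_le _ le_T) _.
have := ler_wpM2l (exprn_ge0 s rho_ge0) le_M; lra.
Qed.

End FixedPoint.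
End ErrorFeedback.

Theorem corollary1 (R : rcfType) (d r l u : nat)
    (K : 'M[R]_(r, d + l) -> {set 'I_r * 'I_(d + l)} -> R)
    (DeltaB : nat -> 'M[R]_(d, r)) (DeltaA : nat -> 'M[R]_(r, l)) (t : nat) :
  let q := (r * (d + l))%N in
  let O := u%:R / q%:R : R in
  let Delta := fun i => concat (DeltaB i) (DeltaA i) in
  (0 < u)%N -> (u < q)%N ->
  (forall x I, 0 <= K x I) ->
  (forall x, \sum_(I : {set 'I_r * 'I_(d + l)}) K x I = 1) ->
  (forall x I, K x I != 0 -> (#|I| = u)%N) ->
  (forall x, \sum_(I : {set 'I_r * 'I_(d + l)}) K x I * frob (x - keep_mask I x) ^+ 2
             <= (1 - O) * frob x ^+ 2) ->
  EF_expect K Delta t.+1 0 0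
    (fun M => frob (@factB R d r l M *m @factA R d r l M))
  <= 2 * (1 - O) / O ^+ 2 *
     \big[Num.max/0]_(i < t.+1) frob (Delta i) ^+ 2.
Proof.
(* Only the contraction property of the sparsifier matters, not how many entries it keeps. *)
move=> q O Delta u_gt0 u_lt_q K_ge0 K_sum1 _ contract.
have q_gt0 : (0 < q)%N := leq_trans u_gt0 (ltnW u_lt_q).
have O_gt0 : 0 < O by rewrite divr_gt0 ?ltr0n.
have O_le1 : O <= 1 by rewrite ler_pdivrMr ?ltr0n // mul1r ler_nat ltnW.
set D := \big[Num.max/0]_(i < t.+1) _.
have Delta_le i : (i < t.+1)%N -> sqfrob (Delta i) <= D.
  move=> lt_i; rewrite -sqr_frob.
  exact: (le_bigmax _ (fun j : 'I_t.+1 => _) (Ordinal lt_i)).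
have sqerr_le x : sparsify_sqerr K x <= (1 - O) * sqfrob x.
  by have := contract x; rewrite sqr_frob; under eq_bigr do rewrite sqr_frob.
have D_ge0 : 0 <= D := le_trans (sqfrob_ge0 _) (Delta_le 0%N isT).
have EF_le := EF_expect_sqfrob_le K_ge0 K_sum1 O_gt0 O_le1 sqerr_le Delta_le
  (s := t.+1) (t0 := 0%N) (M := 0) (leqnn _).
apply: le_trans (EF_expect_le Delta K_ge0 _ _ _ (g := fun M => 2^-1 * sqfrob M) _) _.
  by move=> M; rewrite mulrC frob_factBA_le.
have bound_ge0 : 0 <= 4 * (1 - O) / O ^+ 2 * D.
  by rewrite !mulr_ge0 ?invr_ge0 ?exprn_ge0 ?subr_ge0 // ltW.
rewrite EF_expectZ (_ : 2 * (1 - O) / O ^+ 2 * D = 2^-1 * (4 * (1 - O) / O ^+ 2 * D)).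
  by rewrite ler_wpM2l ?invr_ge0 // EF_le // sqfrob0.
by field; rewrite gt_eqF.
Qed.
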